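(* The Gaussian lattice $\Lambda_{1,6}$ has a $\mathcal G$-basis $e_1,\dots,e_7$ indexed by the nodes of the $E_7$ Coxeter diagram such that $h(e_j,e_j)=-2$, $h(e_j,e_k)=1+i$ and $h(e_k,e_j)=1-i$ whenever $j<k$ are joined in the diagram, and $h(e_j,e_k)=0$ when $j\ne k$ are not joined.
   Context: Let $\mathcal G=\mathbb Z[i]$. $\Lambda_{1,6}=\mathcal G^7$ with Hermitian form $h(x,y)=\bar x^tHy$, $H=\begin{pmatrix}-2&1+i\\1-i&-2\end{pmatrix}^{\oplus3}\oplus(2)$ (block diagonal). The $E_7$ Coxeter diagram has nodes $1,\dots,7$, with edges $1\!-\!2,\ 2\!-\!3,\ 3\!-\!4,\ 4\!-\!5,\ 5\!-\!6$ and $3\!-\!7$. *)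

From HB Require Import structures.
From mathcomp Require Import all_boot all_order all_algebra all_field algC.
Set Implicit Arguments. Unset Strict Implicit. Unset Printing Implicit Defensive.
Import Order.TTheory GRing.Theory Num.Theory.
Local Open Scope ring_scope.

Definition gauss (x : algC) : Prop :=
  exists a b : int, x = a%:~R + b%:~R * 'i.

Definition gvec (v : 'cV[algC]_7) : Prop := forall i, gauss (v i 0).

(* the Gram matrix H = [[-2,1+i],[1-i,-2]]^{+3} (+) (2), 0-based indices *)
Definition Hmat : 'M[algC]_7 :=
  \matrix_(i < 7, j < 7)
    (if i == j then (if (i : nat) == 6%N then 2 else -2)
     else if ((j : nat) == i.+1) && ~~ odd i && ((i : nat) < 6)%N then 1 + 'i
     else if ((i : nat) == j.+1) && ~~ odd j && ((j : nat) < 6)%N then 1 - 'i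
     else 0).

Definition h (x y : 'cV[algC]_7) : algC :=
  ((map_mx Num.conj x)^T *m Hmat *m y) 0 0.

Definition is_G_basis (e : 'I_7 -> 'cV[algC]_7) : Prop :=
  (forall j, gvec (e j)) /\
  (forall v, gvec v ->
     exists c : 'I_7 -> algC, (forall j, gauss (c j)) /\ v = \sum_j c j *: e j) /\
  (forall c d : 'I_7 -> algC, (forall j, gauss (c j)) -> (forall j, gauss (d j)) ->
     \sum_j c j *: e j = \sum_j d j *: e j -> c = d).

(* E7 Coxeter diagram; node k (1-based) is index k-1.
   edges 1-2, 2-3, 3-4, 4-5, 5-6, 3-7 *)
Definition e7edge0 (j k : nat) : bool :=
  [|| (j == 0%N) && (k == 1%N), (j == 1%N) && (k == 2%N), (j == 2%N) && (k == 3%N),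
      (j == 3%N) && (k == 4%N), (j == 4%N) && (k == 5%N) | (j == 2%N) && (k == 6%N)].
Definition e7edge (j k : 'I_7) : bool := e7edge0 j k || e7edge0 k j.

From HB Require Import structures.
From mathcomp Require Import all_boot all_order all_algebra all_field algC.
From mathcomp Require Import ring.
From Stdlib Require Import FunctionalExtensionality.
Import Order.TTheory GRing.Theory Num.Theory.
Local Open Scope ring_scope.

(* The basis vectors e_j are the columns of an explicit 7x7 Gaussian matrix E
   whose inverse is again Gaussian, so they form a G-basis of G^7; the Gram
   matrix of h on them is E^* H E, which is checked by evaluation to be the
   E7 Gram matrix. *)

(* algC does not compute, so Gaussian integers are also modelled as pairs of
   integers, evaluated into algC by [gi]; matrix identities are checked on
   pairs and transported along [gi]. *)
Definition gint := (int * int)%type.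
Definition gi (p : gint) : algC := p.1%:~R + p.2%:~R * 'i.
Definition gadd (p q : gint) : gint := (p.1 + q.1, p.2 + q.2).
Definition gmul (p q : gint) : gint := (p.1 * q.1 - p.2 * q.2, p.1 * q.2 + p.2 * q.1).
Definition gconj (p : gint) : gint := (p.1, - p.2).

Fixpoint gsum (f : nat -> gint) (n : nat) : gint :=
  if n is m.+1 then gadd (gsum f m) (f m) else (0, 0).

Lemma gi_add p q : gi (gadd p q) = gi p + gi q.
Proof. by rewrite /gi /= !intrD; ring. Qed.

Lemma gi_mul p q : gi (gmul p q) = gi p * gi q.
Proof.
have sqrI : 'i * 'i = -1 :> algC by rewrite -expr2 sqrCi.
rewrite /gi /= intrB intrD !intrM.
set I := 'i in sqrI *.
transitivity ((p.1%:~R + p.2%:~R * I) * (q.1%:~R + q.2%:~R * I)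
   - p.2%:~R * q.2%:~R * (I * I + 1) : algC); first by ring.
by rewrite sqrI addNr mulr0 subr0.
Qed.

Lemma gi_conj p : Num.conj (gi p) = gi (gconj p).
Proof.
rewrite /gi rmorphD rmorphM !rmorph_int.
by rewrite [X in _ * X](conjCi algC) intrN mulrN mulNr.
Qed.

Lemma gi_sum (f : nat -> gint) n : \sum_(a < n) gi (f a) = gi (gsum f n).
Proof.
elim: n => [|n IHn]; first by rewrite big_ord0 /gi mul0r addr0.
by rewrite big_ord_recr /= IHn gi_add.
Qed.

Lemma gaussP x : gauss x <-> exists p, x = gi p.
Proof. by split=> [[a [b ->]] | [[a b] ->]]; [exists (a, b) | exists a, b]. Qed.

Lemma gauss_gi p : gauss (gi p).
Proof. by apply/gaussP; exists p. Qed.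

Lemma gauss0 : gauss 0.
Proof. by exists 0, 0; rewrite mul0r addr0. Qed.

Lemma gaussD x y : gauss x -> gauss y -> gauss (x + y).
Proof. by move=> /gaussP [p ->] /gaussP [q ->]; rewrite -gi_add; apply: gauss_gi. Qed.

Lemma gaussM x y : gauss x -> gauss y -> gauss (x * y).
Proof. by move=> /gaussP [p ->] /gaussP [q ->]; rewrite -gi_mul; apply: gauss_gi. Qed.

Lemma gauss_sum (I : finType) (F : I -> algC) :
  (forall i, gauss (F i)) -> gauss (\sum_i F i).
Proof. by move=> gF; apply: big_ind => //; [exact: gauss0 | exact: gaussD]. Qed.

Definition gauss_mx {m n} (A : 'M[algC]_(m, n)) : Prop := forall i j, gauss (A i j).

Lemma gauss_mx_mul m n p (A : 'M_(m, n)) (B : 'M_(n, p)) :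
  gauss_mx A -> gauss_mx B -> gauss_mx (A *m B).
Proof.
by move=> gA gB i j; rewrite mxE; apply: gauss_sum => k; apply: gaussM.
Qed.

Lemma mulmx_sum_col m n (A : 'M[algC]_(m, n)) (u : 'cV_n) :
  A *m u = \sum_j u j 0 *: col j A.
Proof.
apply/matrixP => i z; rewrite (ord1 z) mxE summxE.
by apply: eq_bigr => j _; rewrite !mxE mulrC.
Qed.

Lemma G_basis_cols (E F : 'M[algC]_7) :
  gauss_mx E -> gauss_mx F -> F *m E = 1%:M -> is_G_basis (fun j => col j E).
Proof.
move=> gE gF FE; have EF := mulmx1C FE.
split; [|split].
- by move=> j i; rewrite mxE.
- move=> v gv; exists (fun j => (F *m v) j 0); split.
    by move=> j; apply: gauss_mx_mul => // a z; rewrite (ord1 z).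
  by rewrite -mulmx_sum_col mulmxA EF mul1mx.
- move=> c d _ _ cd; apply: functional_extensionality => j.
  have coefE (a : 'I_7 -> algC) : F *m (\sum_k a k *: col k E) = \col_k a k.
    have -> : \sum_k a k *: col k E = E *m \col_k a k.
      by rewrite mulmx_sum_col; apply: eq_bigr => k _; rewrite mxE.
    by rewrite mulmxA FE mul1mx.
  by have := congr1 (fun u => (F *m u) j 0) cd; rewrite !coefE !mxE.
Qed.

Lemma h_col (E : 'M[algC]_7) j k :
  h (col j E) (col k E) = ((map_mx Num.conj E)^T *m Hmat *m E) j k.
Proof.
rewrite /h !mxE; apply: eq_bigr => b _; rewrite !mxE; congr (_ * _).
by apply: eq_bigr => a _; rewrite !mxE.
Qed.

Definition gmx (A : nat -> nat -> gint) : 'M[algC]_7 := \matrix_(i, j) gi (A i j).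
Definition gmx_mul (A B : nat -> nat -> gint) i j := gsum (fun k => gmul (A i k) (B k j)) 7.
Definition gmx_adj (A : nat -> nat -> gint) i j := gconj (A j i).
Definition gmx_eqb (A B : nat -> nat -> gint) :=
  all (fun i => all (fun j => A i j == B i j) (iota 0 7)) (iota 0 7).

Lemma gmx_mulE A B : gmx (gmx_mul A B) = gmx A *m gmx B.
Proof.
apply/matrixP => i j; rewrite !mxE -gi_sum.
by apply: eq_bigr => k _; rewrite gi_mul !mxE.
Qed.

Lemma gmx_adjE A : gmx (gmx_adj A) = (map_mx Num.conj (gmx A))^T.
Proof. by apply/matrixP => i j; rewrite !mxE gi_conj. Qed.

Lemma gmx_eqbP A B : gmx_eqb A B -> gmx A = gmx B.
Proof.
move=> /allP eqAB; apply/matrixP => i j; rewrite !mxE.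
have inI (k : 'I_7) : (k : nat) \in iota 0 7 by rewrite mem_iota ltn_ord.
by rewrite (eqP (allP (eqAB _ (inI i)) _ (inI j))).
Qed.

Lemma gauss_gmx A : gauss_mx (gmx A).
Proof. by move=> i j; rewrite mxE; apply: gauss_gi. Qed.

Definition Hmat_tab (i j : nat) : gint :=
  if i == j then (if i == 6%N then (2, 0) else (-2, 0))
  else if (j == i.+1) && ~~ odd i && (i < 6)%N then (1, 1)
  else if (i == j.+1) && ~~ odd j && (j < 6)%N then (1, -1)
  else (0, 0).

Lemma HmatE : Hmat = gmx Hmat_tab.
Proof.
apply/matrixP => i j; rewrite !mxE /Hmat_tab /gi.
by case: i => [[|[|[|[|[|[|[|i]]]]]]] ?] //; case: j => [[|[|[|[|[|[|[|j]]]]]]] ?] //=;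
  rewrite ?mul0r ?addr0 ?mul1r ?mulN1r.
Qed.

Definition e7gram (j k : nat) : gint :=
  if j == k then (-2, 0)
  else if e7edge0 j k then (1, 1)
  else if e7edge0 k j then (1, -1)
  else (0, 0).

(* Row j of the table lists the coordinates of e_(j+1). *)
Definition e7basis (a j : nat) : gint :=
  nth (0, 0) (nth [::]
 [:: [:: (0, 1); (0, 0); (0, 1); (0, 0); (-1, 1); (0, 1); (-1, -1)];
     [:: (0, 0); (0, 0); (0, 0); (0, 0); (1, 0); (0, 0); (0, 0)];
     [:: (0, 0); (0, 0); (0, 0); (0, 0); (0, 0); (1, 0); (0, 0)];
     [:: (0, 0); (0, 0); (0, 0); (1, 0); (0, -1); (-1, -1); (1, 0)];
     [:: (0, 0); (0, 0); (0, -1); (-1, -1); (0, 0); (0, 0); (0, 0)];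
     [:: (0, 0); (0, 1); (0, 0); (0, 1); (0, 0); (0, 0); (0, 1)];
     [:: (0, 0); (1, 0); (0, 0); (0, 0); (0, -1); (-1, -1); (1, 0)]] j) a.

Definition e7basis_inv (j a : nat) : gint :=
  nth (0, 0) (nth [::]
 [:: [:: (0, -1); (0, 0); (0, 0); (0, 0); (0, 0); (0, 0); (0, 0)];
     [:: (0, 0); (0, -1); (1, 1); (0, -1); (1, 0); (0, 0); (0, 2)];
     [:: (1, 0); (-1, -1); (2, 0); (-1, -1); (0, 0); (1, 0); (2, 2)];
     [:: (1, -1); (-1, 0); (0, 0); (0, 0); (0, 0); (0, 0); (1, 0)];
     [:: (0, -1); (0, 0); (0, 1); (0, 0); (0, 0); (0, 0); (0, 0)];
     [:: (0, 0); (0, -1); (1, 1); (0, -1); (0, 0); (0, 0); (0, 1)];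
     [:: (0, 0); (0, 0); (1, -1); (-1, 0); (0, 0); (0, 0); (1, 0)]] j) a.

Definition gmx_id (i j : nat) : gint := if i == j then (1, 0) else (0, 0).

Lemma e7basis_unimodular : gmx (gmx_mul e7basis_inv e7basis) = 1%:M.
Proof.
rewrite (gmx_eqbP _ gmx_id); last by vm_compute.
apply/matrixP => i j; rewrite !mxE /gmx_id -[i == j]/((i : nat) == j).
by case: (_ == _); rewrite /gi mul0r addr0.
Qed.

Lemma e7basis_gram j k :
  h (col j (gmx e7basis)) (col k (gmx e7basis)) = gi (e7gram j k).
Proof.
rewrite h_col HmatE -gmx_adjE -!gmx_mulE.
by rewrite (gmx_eqbP _ e7gram) ?mxE //; vm_compute.
Qed.

Lemma e7edge0_lt m n : e7edge0 m n -> (m < n)%N.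
Proof.
by rewrite /e7edge0 => /orP [|/orP [|/orP [|/orP [|/orP []]]]] /andP [/eqP -> /eqP ->].
Qed.

Theorem lemma4p14 :
  exists e : 'I_7 -> 'cV[algC]_7,
    is_G_basis e /\
    (forall j, h (e j) (e j) = -2) /\
    (forall j k : 'I_7, (j < k)%N -> e7edge j k ->
       h (e j) (e k) = 1 + 'i /\ h (e k) (e j) = 1 - 'i) /\
    (forall j k : 'I_7, j != k -> ~~ e7edge j k -> h (e j) (e k) = 0).
Proof.
exists (fun j => col j (gmx e7basis)); split; [|split; [move=> j|split]].
- apply: (G_basis_cols _ (gmx e7basis_inv)); try exact: gauss_gmx.
  by rewrite -gmx_mulE e7basis_unimodular.
- by rewrite e7basis_gram /e7gram eqxx /gi mul0r addr0.
- move=> j k ltjk; rewrite !e7basis_gram /e7gram /e7edge.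
  have nkj : ~~ e7edge0 k j by apply: contraTN ltjk => /e7edge0_lt /ltnW; rewrite leqNgt.
  rewrite (negbTE nkj) orbF => ->.
  by rewrite (ltn_eqF ltjk) eq_sym (ltn_eqF ltjk) /gi mul1r mulN1r.
- move=> j k njk; rewrite e7basis_gram /e7gram /e7edge negb_or => /andP [/negbTE -> /negbTE ->].
  by rewrite ifN // /gi mul0r addr0.
Qed.
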